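(* Let $R$ be a commutative ring with ${\rm char}(R)\neq 2$ and $R_2\neq\{0\}$, let $G$ be a group with involution $\varphi$, and assume $(RG)^-_\varphi$ is commutative. Let $g,h\in G$ with $(g,h)\neq 1$. \begin{enumerate} \item If $g\in G_\varphi$ and $h\notin G_\varphi$, then $gh=\varphi(h)g$ and $hg=g\varphi(h)$. \item If $g,h\in G\setminus G_\varphi$, then $gh\notin G_\varphi$. \item If $g,h\in G\setminus G_\varphi$, then ${\rm char}(R)=4$, the subgroup $\langle g,h\rangle$ has the LC-property and has a unique non-trivial commutator, and $\varphi(g)=(g,h)g$ and $\varphi(h)=(g,h)h$. In particular, if ${\rm char}(R)\neq 4$ then $K=\langle x\in G\mid x\notin G_\varphi\rangle$ is abelian. \end{enumerate}
   Context: An involution on a group $G$ is a map $\varphi:G\to G$ with $\varphi(gh)=\varphi(h)\varphi(g)$ and $\varphi^2=\mathrm{id}$, extended $R$-linearly to $RG$. $G_\varphi=\{g\in G\mid\varphi(g)=g\}$; $(RG)^-_\varphi=\{\alpha\in RG\mid\varphi(\alpha)=-\alpha\}$; $R_2=\{r\in R\mid 2r=0\}$. The group commutator is $(g,h)=ghg^{-1}h^{-1}$. A group $H$ has the LC (lack of commutativity) property if for all $a,b\in H$: $ab=ba$ if and only if $a\in Z(H)$ or $b\in Z(H)$ or $ab\in Z(H)$. ''Unique non-trivial commutator'' means the set $\{(a,b)\mid a,b\in H\}$ has exactly one element different from $1$. *)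

From HB Require Import structures.
From mathcomp Require Import all_boot all_order all_algebra.
Set Implicit Arguments. Unset Strict Implicit. Unset Printing Implicit Defensive.
Import GRing.Theory.
Local Open Scope ring_scope.

Definition has_char (R : comNzRingType) (n : nat) : Prop :=
  forall m : nat, (m%:R == 0 :> R) = (n %| m)%N.

Definition R2_nontrivial (R : comNzRingType) : Prop :=
  exists r : R, r *+ 2 = 0 /\ r <> 0.

Definition is_involution (G : groupType) (phi : G -> G) : Prop :=
  (forall g h : G, phi (g * h)%g = (phi h * phi g)%g) /\ (forall g, phi (phi g) = g).

Definition pcomm (G : groupType) (g h : G) : G := (g * h * g^-1 * h^-1)%g.

Definition fixedp (G : groupType) (phi : G -> G) (g : G) : Prop := phi g = g.

(* The group ring RG: an element is represented by a finite formal sum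
   \sum r_i g_i (a list of pairs); two representatives denote the same
   element iff all their coefficients agree. *)
Definition RG (R : comNzRingType) (G : groupType) := seq (R * G).

Definition rg_coeff (R : comNzRingType) (G : groupType) (a : RG R G) (x : G) : R :=
  \sum_(p <- a | p.2 == x) p.1.

Definition rg_eq (R : comNzRingType) (G : groupType) (a b : RG R G) : Prop :=
  forall x, rg_coeff a x = rg_coeff b x.

Definition rg_mul (R : comNzRingType) (G : groupType) (a b : RG R G) : RG R G :=
  [seq (p.1 * q.1, (p.2 * q.2)%g) | p <- a, q <- b].

Definition rg_map (R : comNzRingType) (G : groupType) (phi : G -> G) (a : RG R G) : RG R G :=
  [seq (p.1, phi p.2) | p <- a].

Definition rg_skew (R : comNzRingType) (G : groupType) (phi : G -> G) (a : RG R G) : Prop :=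
  forall x, rg_coeff (rg_map phi a) x = - rg_coeff a x.

Definition skew_commutative (R : comNzRingType) (G : groupType) (phi : G -> G) : Prop :=
  forall a b : RG R G, rg_skew phi a -> rg_skew phi b -> rg_eq (rg_mul a b) (rg_mul b a).

Inductive gen (G : groupType) (S : G -> Prop) : G -> Prop :=
| gen_in  : forall x, S x -> gen S x
| gen_one : gen S 1%g
| gen_mul : forall x y, gen S x -> gen S y -> gen S (x * y)%g
| gen_inv : forall x, gen S x -> gen S (x^-1)%g.

Definition gen2 (G : groupType) (g h : G) : G -> Prop :=
  gen (fun x => x = g \/ x = h).

Definition centre (G : groupType) (H : G -> Prop) (z : G) : Prop :=
  H z /\ forall y, H y -> (z * y = y * z)%g.

Definition LC_property (G : groupType) (H : G -> Prop) : Prop :=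
  forall a b, H a -> H b ->
    ((a * b = b * a)%g <-> (centre H a \/ centre H b \/ centre H (a * b)%g)).

Definition unique_nontrivial_commutator (G : groupType) (H : G -> Prop) : Prop :=
  exists c : G, c <> 1%g /\ (exists a b, H a /\ H b /\ pcomm a b = c) /\
    forall a b, H a -> H b -> pcomm a b = 1%g \/ pcomm a b = c.

Definition abelian_sub (G : groupType) (H : G -> Prop) : Prop :=
  forall x y, H x -> H y -> (x * y = y * x)%g.

From HB Require Import structures.
From mathcomp Require Import all_boot all_order all_algebra ring.
Set Implicit Arguments. Unset Strict Implicit. Unset Printing Implicit Defensive.
Import GRing.Theory.
Local Open Scope ring_scope.

(* The ring-theoretic input consists of two kinds of skew elements: x - phi x
   for every x, and r x for r in R_2 and x fixed by phi.  Comparing single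
   coefficients in the commutation identities of such elements gives:
   (1) if g is fixed and h is not, gh = phi(h)g and hg = g phi(h);
   (2) applying (1) to the pair (gh, g) shows gh is not fixed when g, h are not;
   (3) for g, h both non-fixed, the coefficient of gh in
       (g - phi g)(h - phi h) = (h - phi h)(g - phi g) reads 1 + b1 + b2 + b3 = 0
       for three indicators b_i; as 2, 3 <> 0 in R, all b_i hold and 4 = 0.
   The three relations so obtained force c = (g,h) to be a central involution
   of <g,h> with phi g = c g and phi h = c h.  A purely group-theoretic part
   then shows that in a group generated by g, h whose commutator c is a
   central involution, every commutator lies in {1, c} and "x, y do not
   commute" is a symplectic form on <g,h> modulo its centre, from which the
   LC property and the uniqueness of the non-trivial commutator follow.
   Finally, if char R <> 4 any two non-fixed elements commute, hence so does
   the subgroup they generate. *)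

Section Generation.
Local Open Scope group_scope.
Variable G : groupType.
Implicit Types (S : G -> Prop) (a b g h x y z : G).

Lemma gen_commute S x : (forall s, S s -> commute x s) -> forall y, gen S y -> commute x y.
Proof.
move=> xS y; elim=> {y} [s /xS //| |y1 y2 _ IH1 _ IH2|y _ IH].
- exact: commute1.
- exact: commuteM.
- exact: commuteV.
Qed.

Lemma gen_abelian S : (forall x y, S x -> S y -> commute x y) -> abelian_sub (gen S).
Proof.
move=> cS x y Sx Sy; apply: (gen_commute _ Sy) => s Ss.
by apply/commute_sym; apply: (gen_commute _ Sx) => t St; apply/commute_sym/cS.
Qed.

Lemma gen2_l g h : gen2 g h g. Proof. by apply: gen_in; left. Qed.
Lemma gen2_r g h : gen2 g h h. Proof. by apply: gen_in; right. Qed.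

Definition ncomm x y : bool := x * y != y * x.

Lemma ncomm_sym x y : ncomm x y = ncomm y x. Proof. by rewrite /ncomm eq_sym. Qed.

Lemma ncomm_invr x y : ncomm x y^-1 = ncomm x y.
Proof.
congr negb; apply/eqP/eqP => [/commuteV|/commuteV //].
by rewrite invgK.
Qed.

Lemma centre_gen2 g h x :
  gen2 g h x -> ~~ ncomm x g -> ~~ ncomm x h -> centre (gen2 g h) x.
Proof.
move=> Hx /negPn/eqP xg /negPn/eqP xh; split=> // y; apply: gen_commute.
by move=> s [->|->].
Qed.

Lemma pcommE x y : x * y = pcomm x y * (y * x).
Proof. by rewrite /pcomm mulgA !mulgVK. Qed.

Lemma pcomm_unique x y z : x * y = z * (y * x) -> pcomm x y = z.
Proof. by rewrite pcommE => /mulIg. Qed.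

Lemma pcomm1P x y : pcomm x y = 1 <-> commute x y.
Proof.
split=> [c1|xy]; first by rewrite /commute pcommE c1 mul1g.
by apply: pcomm_unique; rewrite mul1g.
Qed.

End Generation.

Section CentralCommutator.
Local Open Scope group_scope.
Variables (G : groupType) (g h c : G).
Hypotheses (cg : commute c g) (ch : commute c h) (c2 : c * c = 1) (c1 : c != 1)
  (ghc : g * h = c * (h * g)).
Local Notation H := (gen2 g h).

Lemma c_central x : H x -> commute c x.
Proof. by apply: gen_commute => s [->|->]. Qed.

Lemma expc_odd n : c ^+ n = c ^+ odd n.
Proof.
elim: n => // n IH; rewrite expgS IH /=.
by case: (odd n); rewrite /= ?expg1 ?expg0 ?mulg1.
Qed.

Lemma expc_double n : c ^+ n * c ^+ n = 1.
Proof. by rewrite expc_odd; case: (odd n); rewrite /= ?mulg1. Qed.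

Definition ccomm x y := exists n, x * y = c ^+ n * (y * x).

Lemma ccomm_sym x y : ccomm x y -> ccomm y x.
Proof. by case=> n E; exists n; rewrite E mulgA expc_double mul1g. Qed.

Lemma ccomm_mulr_exp x y1 y2 n1 n2 : commute c y1 ->
  x * y1 = c ^+ n1 * (y1 * x) -> x * y2 = c ^+ n2 * (y2 * x) ->
  x * (y1 * y2) = c ^+ (n1 + n2) * (y1 * y2 * x).
Proof.
move=> cy1 E1 E2.
rewrite mulgA E1 -!mulgA E2 !mulgA -(mulgA _ y1) (commuteX n2 (commute_sym cy1)).
by rewrite expgnDr !mulgA.
Qed.

Lemma ccomm_invr x y : commute c y -> ccomm x y -> ccomm x y^-1.
Proof.
move=> cy /ccomm_sym [n E]; exists n; apply: (mulgI y).
rewrite mulgA E -mulgA mulgK mulgA (commuteX n (commute_sym cy)).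
by rewrite -mulgA mulVKg.
Qed.

Lemma ccomm_gen x : ccomm x g -> ccomm x h -> forall y, H y -> ccomm x y.
Proof.
move=> xg xh y; elim=> {y} [y [->|->] //| |y1 y2 Hy1 [n1 E1] _ [n2 E2]|y Hy IH].
- by exists 0%N; rewrite mulg1 expg0 !mul1g.
- by exists (n1 + n2)%N; apply: ccomm_mulr_exp (c_central Hy1) E1 E2.
- exact: ccomm_invr (c_central Hy) IH.
Qed.

Lemma ccomm_all x y : H x -> H y -> ccomm x y.
Proof.
have gg : ccomm g g by exists 0%N; rewrite mul1g.
have hh : ccomm h h by exists 0%N; rewrite mul1g.
have gh : ccomm g h by exists 1%N.
move=> Hx; apply: ccomm_gen; apply: ccomm_sym; apply: ccomm_gen => //.
exact: ccomm_sym.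
Qed.

Lemma ncomm_exp x y n : x * y = c ^+ n * (y * x) -> ncomm x y = odd n.
Proof.
rewrite /ncomm expc_odd => ->; case: (odd n); last by rewrite mul1g eqxx.
by rewrite -{2}(mul1g (y * x)) (inj_eq (@mulIg _ _)).
Qed.

Lemma ncomm_mulr x y1 y2 :
  H x -> H y1 -> H y2 -> ncomm x (y1 * y2) = ncomm x y1 (+) ncomm x y2.
Proof.
move=> Hx Hy1 Hy2; have [n1 E1] := ccomm_all Hx Hy1; have [n2 E2] := ccomm_all Hx Hy2.
rewrite (ncomm_exp (ccomm_mulr_exp (c_central Hy1) E1 E2)) oddD.
by rewrite (ncomm_exp E1) (ncomm_exp E2).
Qed.

Lemma ncomm_gh : ncomm g h.
Proof. exact: (@ncomm_exp _ _ 1 ghc). Qed.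

Lemma ncomm_formula a b : H a -> H b ->
  ncomm a b = (ncomm a g && ncomm b h) (+) (ncomm a h && ncomm b g).
Proof.
have Hg := gen2_l g h; have Hh := gen2_r g h.
move=> Ha; elim=> {b} [b [->|->]| |b1 b2 Hb1 IH1 Hb2 IH2|b Hb IH].
- by rewrite ncomm_gh /ncomm eqxx andbT andbF addbF.
- by rewrite (ncomm_sym h g) ncomm_gh /ncomm eqxx andbT andbF.
- by rewrite /ncomm !mulg1 !mul1g !eqxx !andbF.
- rewrite ncomm_mulr // IH1 IH2 !(ncomm_sym (b1 * b2)) !ncomm_mulr //.
  by rewrite !(ncomm_sym g) !(ncomm_sym h) !andb_addr addbACA.
- by rewrite ncomm_invr IH !(ncomm_sym b^-1) !ncomm_invr !(ncomm_sym _ b).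
Qed.

Lemma LC_gen2 : LC_property H.
Proof.
move=> a b Ha Hb; split=> [ab | [[_ ac]|[[_ bc]|[_ abc]]]]; last 3 first.
- exact: ac.
- exact/esym/bc.
- by apply: (mulgI a); rewrite -(abc a Ha) mulgA.
have Hab := gen_mul Ha Hb; have Hg := gen2_l g h; have Hh := gen2_r g h.
have F : (ncomm a g && ncomm b h) (+) (ncomm a h && ncomm b g) = false.
  by rewrite -ncomm_formula // /ncomm ab eqxx.
have ab_g : ncomm (a * b) g = ncomm a g (+) ncomm b g.
  by rewrite ncomm_sym ncomm_mulr // !(ncomm_sym g).
have ab_h : ncomm (a * b) h = ncomm a h (+) ncomm b h.
  by rewrite ncomm_sym ncomm_mulr // !(ncomm_sym h).
case Ea: (ncomm a g || ncomm a h); last first.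
  by move/norP: Ea => [ag ah]; left; apply: centre_gen2.
case Eb: (ncomm b g || ncomm b h); last first.
  by move/norP: Eb => [bg bh]; right; left; apply: centre_gen2.
right; right; apply: centre_gen2; rewrite ?ab_g ?ab_h //; move: F Ea Eb;
  by case: (ncomm a g); case: (ncomm a h); case: (ncomm b g); case: (ncomm b h).
Qed.

Lemma unique_commutator_gen2 : unique_nontrivial_commutator H.
Proof.
exists c; split; first exact/eqP.
split.
  by exists g, h; split; [exact: gen2_l | split; [exact: gen2_r | exact: pcomm_unique]].
move=> a b Ha Hb; have [n /pcomm_unique ->] := ccomm_all Ha Hb.
by rewrite expc_odd; case: (odd n); [right | left].
Qed.

End CentralCommutator.

Section Characteristic.
Variable R : comNzRingType.

Lemma natr_modn n m : n%:R = 0 :> R -> m%:R = (m %% n)%N%:R :> R.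
Proof. by move=> n0; rewrite {1}(divn_eq m n) natrD natrM n0 mulr0 add0r. Qed.

(* char R <> 2 means exactly 2 <> 0, as 2 = 0 forces characteristic 2. *)
Lemma two_neq0 : ~ has_char R 2 -> 2%:R != 0 :> R.
Proof.
move=> not2; apply/eqP => two0; apply: not2 => m.
by rewrite (natr_modn m two0) modn2 dvdn2; case: (odd m); rewrite ?oner_eq0 ?eqxx.
Qed.

(* A non-zero r with 2r = 0 satisfies 3r = r, so 3 <> 0. *)
Lemma three_neq0 : R2_nontrivial R -> 3%:R != 0 :> R.
Proof.
case=> r [r2 r0]; apply/eqP => three0; apply: r0.
by rewrite -[r]add0r -r2 -mulrSr -mulr_natr three0 mulr0.
Qed.

Lemma has_char4 : 4%:R = 0 :> R -> 2%:R != 0 :> R -> has_char R 4.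
Proof.
move=> four0 two_n0 m.
have three_n0 : 3%:R != 0 :> R.
  apply: contra_neq (oner_neq0 R) => three0.
  by move: (natrD R 1 3); rewrite four0 three0 addr0 mulr1n.
rewrite (natr_modn m four0) /dvdn.
have : (m %% 4 < 4)%N by rewrite ltn_pmod.
by case: (m %% 4)%N => [|[|[|[|k]]]] //= _;
  rewrite ?eqxx ?oner_eq0 ?(negbTE two_n0) ?(negbTE three_n0).
Qed.

Lemma oppr_R2 (r : R) : r *+ 2 = 0 -> - r = r.
Proof. by move=> r2; apply/eqP; rewrite eq_sym -subr_eq0 opprK -mulr2n r2. Qed.

Lemma four_indicators (b1 b2 b3 : bool) : 2%:R != 0 :> R -> 3%:R != 0 :> R ->
  1 + b1%:R + b2%:R + b3%:R = 0 :> R -> [/\ b1, b2, b3 & 4%:R = 0 :> R].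
Proof.
move=> two_n0 three_n0; rewrite -[1]/(1%:R) -!natrD.
by case: b1; case: b2; case: b3; rewrite !(addn0, addn1) => /eqP;
  rewrite ?oner_eq0 ?(negbTE two_n0) ?(negbTE three_n0) // => /eqP.
Qed.

End Characteristic.

Section GroupRing.
Variables (R : comNzRingType) (G : groupType).
Implicit Types (phi : G -> G) (a : RG R G) (r : R) (x y : G).

Lemma coeff_cons r x a y : rg_coeff ((r, x) :: a) y = r *+ (x == y) + rg_coeff a y.
Proof. by rewrite /rg_coeff big_cons /=; case: eqP; rewrite ?add0r. Qed.

Lemma coeff_nil y : rg_coeff ([::] : RG R G) y = 0.
Proof. by rewrite /rg_coeff big_nil. Qed.

Lemma skew_diff phi x : phi (phi x) = x -> rg_skew phi ([:: (1, x); (-1, phi x)] : RG R G).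
Proof.
move=> phiK y; rewrite /rg_map /= !coeff_cons coeff_nil phiK !addr0.
by rewrite opprD !mulNrn opprK addrC.
Qed.

Lemma skew_R2 phi r x : r *+ 2 = 0 -> phi x = x -> rg_skew phi ([:: (r, x)] : RG R G).
Proof.
by move=> r2 fx y; rewrite /rg_map /= !coeff_cons coeff_nil fx addr0 -mulNrn oppr_R2.
Qed.

End GroupRing.

Section Involution.
Variables (R : comNzRingType) (G : groupType) (phi : G -> G).
Hypotheses (phiM : forall x y : G, phi (x * y)%g = (phi y * phi x)%g) (phiK : involutive phi)
  (skewC : skew_commutative R phi).

(* Part (1): compare the coefficients of gh and hg in r g (h - phi h) = (h - phi h) r g. *)
Lemma fixed_nonfixed (r : R) (g h : G) : r *+ 2 = 0 -> r != 0 ->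
  phi g = g -> phi h <> h -> ~ commute g h ->
  (g * h = phi h * g)%g /\ (h * g = g * phi h)%g.
Proof.
move=> r2 r0 fg nfh ngh.
have E := skewC (skew_R2 r2 fg) (skew_diff R (phiK h)).
have neg_forces (b : bool) : - r *+ b = r -> b.
  by case: b; rewrite ?mulr0n // => /esym/eqP; rewrite (negbTE r0).
have gh_hg : ((g * h)%g == (h * g)%g) = false by apply/eqP.
have hg_gh : ((h * g)%g == (g * h)%g) = false by apply/eqP => /esym.
have gph_gh : ((g * phi h)%g == (g * h)%g) = false by apply/eqP => /mulgI.
have phg_hg : ((phi h * g)%g == (h * g)%g) = false by apply/eqP => /mulIg.
have := E (g * h)%g; have := E (h * g)%g; rewrite /rg_mul /= !coeff_cons !coeff_nil !addr0.
rewrite gh_hg hg_gh gph_gh phg_hg mulr1 mul1r mulrN1 mulN1r !mulr0n !eqxx mulr1n.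
rewrite !add0r !addr0 => /esym hg_eq gh_eq.
by split; apply/esym/eqP; apply: neg_forces.
Qed.

(* Part (2): if gh were fixed, part (1) for the pair (gh, g) would make h fixed. *)
Lemma nonfixed_product (r : R) (g h : G) : r *+ 2 = 0 -> r != 0 ->
  phi g <> g -> phi h <> h -> ~ commute g h -> phi (g * h)%g <> (g * h)%g.
Proof.
move=> r2 r0 nfg nfh ngh fgh.
have ngh_g : ~ commute (g * h)%g g.
  by move=> E; apply: ngh; apply: (mulgI g); rewrite -E mulgA.
have [_ E] := fixed_nonfixed r2 r0 fgh nfg ngh_g.
have gh_hpg : (g * h = h * phi g)%g by apply: (mulgI g); rewrite E mulgA.
by apply: nfh; apply: (mulIg (phi g)); rewrite -phiM fgh gh_hpg.
Qed.

(* Part (3), ring step: the coefficient of gh in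
   (g - phi g)(h - phi h) = (h - phi h)(g - phi g). *)
Lemma nonfixed_pair_identities (g h : G) : 2%:R != 0 :> R -> 3%:R != 0 :> R ->
  phi g <> g -> phi h <> h -> ~ commute g h -> phi (g * h)%g <> (g * h)%g ->
  [/\ 4%:R = 0 :> R, (phi g * phi h = g * h)%g, (h * phi g = g * h)%g
     & (phi h * g = g * h)%g].
Proof.
move=> two_n0 three_n0 nfg nfh ngh nfgh.
have gph : ((g * phi h)%g == (g * h)%g) = false by apply/eqP => /mulgI.
have pgh : ((phi g * h)%g == (g * h)%g) = false by apply/eqP => /mulIg.
have hg : ((h * g)%g == (g * h)%g) = false by apply/eqP => /esym.
have phpg : ((phi h * phi g)%g == (g * h)%g) = false by apply/eqP; rewrite -phiM.
have := skewC (skew_diff R (phiK g)) (skew_diff R (phiK h)) (g * h)%g.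
rewrite /rg_mul /= !coeff_cons coeff_nil eqxx gph pgh hg phpg !mulr0n !addr0 !add0r.
rewrite mulr1 mulrNN mulrN1 mulN1r !mulNrn mulr1n => /eqP; rewrite -subr_eq0 => /eqP E.
set b1 := (h * phi g == g * h)%g in E; set b2 := (phi h * g == g * h)%g in E.
set b3 := (phi g * phi h == g * h)%g in E.
have [/eqP hpg /eqP phg /eqP pgph four0] : [/\ b1, b2, b3 & 4%:R = 0 :> R].
  by apply: four_indicators => //; rewrite -E; ring.
by [].
Qed.

(* Part (3), group step: applying phi to those three relations, the
   commutator c of g and h is a central involution with phi g = cg, phi h = ch. *)
Lemma nonfixed_pair_commutator (g h c : G) : (g * h = c * (h * g))%g ->
  (phi g * phi h = g * h)%g -> (h * phi g = g * h)%g -> (phi h * g = g * h)%g ->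
  [/\ phi g = c * g, phi h = c * h, c * c = 1, commute c g & commute c h]%g.
Proof.
move=> ghc pgph hpg phg.
have hg_gph : (h * g = g * phi h)%g.
  have -> : (h * g = phi (phi g * phi h))%g by rewrite phiM !phiK.
  by rewrite pgph -hpg phiM phiK.
have pgh_gph : (phi g * h = g * phi h)%g.
  have -> : (phi g * h = phi (phi h * g))%g by rewrite phiM phiK.
  by rewrite phg -hpg phiM phiK.
have ph_ch : phi h = (c * h)%g by apply: (mulIg g); rewrite phg ghc mulgA.
have pg_gc : phi g = (g * c)%g by apply: (mulIg h); rewrite pgh_gph ph_ch mulgA.
have cc : (c * c = 1)%g.
  by apply: (mulgI g); apply: (mulIg h); rewrite mulg1 -pgph pg_gc ph_ch !mulgA.
have cg : commute c g.
  have gcgc : g = (c * g * c)%g by apply: (mulIg h); rewrite ghc hg_gph ph_ch !mulgA.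
  by rewrite /commute {2}gcgc -mulgA cc mulg1.
have ch : commute c h.
  have hchc : h = (c * h * c)%g.
    by apply: (mulgI g); rewrite -hpg pg_gc !mulgA hg_gph ph_ch !mulgA.
  by rewrite /commute {2}hchc -mulgA cc mulg1.
by split; rewrite // pg_gc cg.
Qed.

End Involution.

Theorem lemma2p4 (R : comNzRingType) (G : groupType) (phi : G -> G)
  (hchar2 : ~ has_char R 2) (hR2 : R2_nontrivial R)
  (hphi : is_involution phi) (hcomm : skew_commutative R phi) :
  (forall g h : G, pcomm g h <> 1%g ->
     ((fixedp phi g -> ~ fixedp phi h ->
         (g * h = phi h * g)%g /\ (h * g = g * phi h)%g) /\
      (~ fixedp phi g -> ~ fixedp phi h -> ~ fixedp phi (g * h)%g) /\
      (~ fixedp phi g -> ~ fixedp phi h ->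
         has_char R 4 /\ LC_property (gen2 g h) /\
         unique_nontrivial_commutator (gen2 g h) /\
         phi g = (pcomm g h * g)%g /\ phi h = (pcomm g h * h)%g))) /\
  (~ has_char R 4 -> abelian_sub (gen (fun x : G => ~ fixedp phi x))).
Proof.
have [phiM phiK] := hphi; have [r [r2 r0]] := hR2; have {}r0 : r != 0 by apply/eqP.
have two_n0 := two_neq0 hchar2; have three_n0 := three_neq0 hR2.
have nonfixed_pair (g h : G) : pcomm g h <> 1%g -> ~ fixedp phi g -> ~ fixedp phi h ->
    has_char R 4 /\ LC_property (gen2 g h) /\ unique_nontrivial_commutator (gen2 g h) /\
    phi g = (pcomm g h * g)%g /\ phi h = (pcomm g h * h)%g.
  move=> /[dup] c1 /pcomm1P ngh nfg nfh; have ghc := pcommE g h.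
  have nfgh := nonfixed_product phiM phiK hcomm r2 r0 nfg nfh ngh.
  have [four0 pgph hpg phg] :=
    nonfixed_pair_identities phiM phiK hcomm two_n0 three_n0 nfg nfh ngh nfgh.
  have [-> -> cc cg ch] := nonfixed_pair_commutator phiM phiK ghc pgph hpg phg.
  have {}c1 : pcomm g h != 1%g by apply/eqP.
  split; first exact: has_char4.
  by split; [exact: LC_gen2 cg ch cc c1 ghc | split; first exact: unique_commutator_gen2 ghc].
split=> [g h c1 | not4].
  have ngh : ~ commute g h by move/pcomm1P.
  split; first by move=> fg nfh; exact: (fixed_nonfixed phiK hcomm r2 r0 fg nfh ngh).
  split; first by move=> nfg nfh; exact: (nonfixed_product phiM phiK hcomm r2 r0 nfg nfh ngh).
  exact: nonfixed_pair.
apply: gen_abelian => a b nfa nfb; apply/pcomm1P.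
by case: (pcomm a b =P 1%g) => // c1; case: not4; case: (nonfixed_pair a b c1 nfa nfb).
Qed.
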